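(* Let $\mathcal R:(\mathbb R^d\setminus\{0\})\times\mathbb R\to\mathbb R$ be differentiable and scale-invariant in its first argument: $\mathcal R(kw,\alpha)=\mathcal R(w,\alpha)$ for all $k>0$. Let $\hat w\in\mathbb R^d$ be fixed, let $\eta,\eta_\alpha>0$, and let $(w_t,\alpha_t)$ be generated by $w_{t+1}=w_t-\eta\nabla_w\mathcal R(w_t,\alpha_t)$, $\alpha_{t+1}=\alpha_t-\eta_\alpha\partial_\alpha\mathcal R(w_t,\alpha_t)$ with $w_0\neq0$. Write $\nabla_w\mathcal R_t:=\nabla_w\mathcal R(w_t,\alpha_t)$, $\rho_t:=\langle\hat w,w_t\rangle/\|w_t\|$, $\rho_t^\perp:=\|\hat w-\rho_tw_t/\|w_t\|\|$. (Convergence) If for some $t\ge0$, $\rho_t>0$ and $$\frac{\eta\rho_t}{\|w_t\|}\|\nabla_w\mathcal R_t\|^2\le-2\langle\hat w,\nabla_w\mathcal R_t\rangle,$$ then $(\rho^\perp_{t+1})^2\le(\rho^\perp_t)^2$. (Divergence) If for some $t\ge0$, $0<\rho_t^\perp/\rho_t<1$, $\alpha_t>0$ and $$\frac{\eta}{\|w_t\|}\|\nabla_w\mathcal R_t\|\ge\frac{2\rho_t\rho_t^\perp}{\rho_t^2-(\rho_t^\perp)^2},$$ then $(\rho^\perp_{t+1})^2\ge(\rho^\perp_t)^2$.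
   Context: All norms and inner products are Euclidean. Note that scale-invariance implies $\langle w,\nabla_w\mathcal R(w,\alpha)\rangle=0$, so all iterates stay nonzero. *)

From HB Require Import structures.
From mathcomp Require Import all_boot all_order all_algebra.
From mathcomp Require Import all_classical all_reals all_analysis.
Set Implicit Arguments. Unset Strict Implicit. Unset Printing Implicit Defensive.
Import Order.TTheory GRing.Theory Num.Theory.
Import numFieldNormedType.Exports.
Local Open Scope ring_scope.

(* Euclidean inner product and Euclidean norm on row vectors R^d
   (MathComp's built-in norm on 'rV is the sup norm, so we define these). *)
Definition dotv {R : realType} {d : nat} (u v : 'rV[R]_d) : R :=
  \sum_(i < d) u 0 i * v 0 i.

Definition enorm {R : realType} {d : nat} (v : 'rV[R]_d) : R :=
  Num.sqrt (dotv v v).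

Definition gradw {R : realType} {d : nat} (F : 'rV[R]_d -> R -> R)
  (w : 'rV[R]_d) (a : R) : 'rV[R]_d :=
  \row_(i < d) ('D_(delta_mx 0 i) (fun v => F v a) w : R).

Definition derva {R : realType} {d : nat} (F : 'rV[R]_d -> R -> R)
  (w : 'rV[R]_d) (a : R) : R :=
  'D_1 (fun b : R => F w b) a.

Definition rho {R : realType} {d : nat} (what w : 'rV[R]_d) : R :=
  dotv what w / enorm w.

Definition rhoperp {R : realType} {d : nat} (what w : 'rV[R]_d) : R :=
  enorm (what - (rho what w / enorm w) *: w).

From HB Require Import structures.
From mathcomp Require Import all_boot all_order all_algebra.
From mathcomp Require Import all_classical all_reals all_analysis.
From mathcomp Require Import ring lra.
Import Order.TTheory GRing.Theory Num.Theory.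
Import numFieldNormedType.Exports.
Local Open Scope ring_scope.

(* Scale invariance of R(., a) makes the directional derivative along w vanish, so the gradient
   step g_t is orthogonal to w_t.  Hence ||w_{t+1}||^2 = ||w_t||^2 + eta^2 ||g_t||^2 and
   <what, w_{t+1}> = <what, w_t> - eta <what, g_t>, while (rho^perp)^2 = ||what||^2 - rho^2 for any
   nonzero w.  Both claims thus compare rho_{t+1}^2 with rho_t^2, which is elementary algebra in the
   scalars ||w_t||, rho_t, <what, g_t> and ||g_t||; for the divergence part, orthogonality also gives
   <what, g_t> = <what - rho_t w_t/||w_t||, g_t>, so Cauchy-Schwarz bounds it by rho^perp_t ||g_t||. *)

Section EuclideanGeometry.
Context {R : realType} {d : nat}.
Implicit Types (x y z what : 'rV[R]_d) (a : R).

Lemma dotvC x y : dotv x y = dotv y x.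
Proof. by apply: eq_bigr => i _; rewrite mulrC. Qed.

Lemma dotvBl x y z : dotv (x - y) z = dotv x z - dotv y z.
Proof. by rewrite /dotv -sumrB; apply: eq_bigr => i _; rewrite !mxE mulrBl. Qed.

Lemma dotvZl a x z : dotv (a *: x) z = a * dotv x z.
Proof. by rewrite /dotv mulr_sumr; apply: eq_bigr => i _; rewrite mxE mulrA. Qed.

Lemma dotvBr x y z : dotv z (x - y) = dotv z x - dotv z y.
Proof. by rewrite dotvC dotvBl !(dotvC z). Qed.

Lemma dotvZr a x z : dotv z (a *: x) = a * dotv z x.
Proof. by rewrite dotvC dotvZl dotvC. Qed.

Lemma dotv0r x : dotv x 0 = 0.
Proof. by rewrite -(scale0r 0) dotvZr mul0r. Qed.

Lemma dotv_ge0 x : 0 <= dotv x x.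
Proof. by apply: sumr_ge0 => i _; rewrite -expr2 sqr_ge0. Qed.

Lemma dotv_gt0 {x} : x != 0 -> 0 < dotv x x.
Proof.
move=> x0; rewrite lt_def dotv_ge0 andbT; apply: contra x0 => /eqP xx0.
apply/eqP/matrixP => i j; rewrite ord1 mxE.
have /eqP : x 0 j * x 0 j = 0.
  by apply: (psumr_eq0P _ xx0) => // k _; rewrite -expr2 sqr_ge0.
by rewrite mulf_eq0 orbb => /eqP.
Qed.

Lemma enorm_sq x : enorm x ^+ 2 = dotv x x.
Proof. by rewrite /enorm sqr_sqrtr // dotv_ge0. Qed.

Lemma enorm_ge0 x : 0 <= enorm x.
Proof. exact: sqrtr_ge0. Qed.

Lemma enorm_gt0 {x} : x != 0 -> 0 < enorm x.
Proof. by move=> x0; rewrite /enorm sqrtr_gt0 dotv_gt0. Qed.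

Lemma normr_dotv_le x y : `|dotv x y| <= enorm x * enorm y.
Proof.
have [->|y0] := eqVneq y 0; first by rewrite dotv0r normr0 mulr_ge0 ?enorm_ge0.
have Y0 := dotv_gt0 y0.
set X := dotv x x; set Y := dotv y y; set q := dotv x y.
have : 0 <= dotv (Y *: x - q *: y) (Y *: x - q *: y) := dotv_ge0 _.
rewrite dotvBl !dotvBr !dotvZl !dotvZr (dotvC y x) -/X -/Y -/q.
have -> : Y * (Y * X) - Y * (q * q) - (q * (Y * q) - q * (q * Y)) =
  Y * (X * Y - q ^+ 2) by ring.
rewrite pmulr_rge0 // subr_ge0 => qXY.
rewrite -ler_sqr ?nnegrE ?normr_ge0 ?mulr_ge0 ?enorm_ge0 //.
by rewrite real_normK ?num_real // exprMn !enorm_sq.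
Qed.

Lemma dotv_orthogonal_step {x g} a : dotv x g = 0 ->
  dotv (x - a *: g) (x - a *: g) = dotv x x + a ^+ 2 * dotv g g.
Proof. by move=> xg0; rewrite dotvBl !dotvBr !dotvZl !dotvZr (dotvC g x) xg0; ring. Qed.

Lemma rho_sq what x : rho what x ^+ 2 = dotv what x ^+ 2 / dotv x x.
Proof. by rewrite /rho expr_div_n enorm_sq. Qed.

Lemma rhoperp_sq what x : x != 0 ->
  rhoperp what x ^+ 2 = dotv what what - rho what x ^+ 2.
Proof.
move=> x0; have := enorm_gt0 x0; rewrite /rhoperp /rho enorm_sq.
rewrite dotvBl !dotvBr !dotvZl !dotvZr (dotvC x what) -[dotv x x]enorm_sq.
by move=> n0; field; rewrite gt_eqF.
Qed.

Lemma rho_orthogonal_step what {x g} a : x != 0 -> dotv x g = 0 ->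
  rho what (x - a *: g) ^+ 2 =
  (rho what x * enorm x - a * dotv what g) ^+ 2 / (enorm x ^+ 2 + a ^+ 2 * enorm g ^+ 2).
Proof.
move=> x0 xg0; rewrite rho_sq dotv_orthogonal_step // !enorm_sq.
by rewrite dotvBr dotvZr /rho divfK ?gt_eqF ?enorm_gt0.
Qed.

Lemma dotv_projection_orthogonal what {x g} : dotv x g = 0 ->
  dotv what g = dotv (what - (rho what x / enorm x) *: x) g.
Proof. by move=> xg0; rewrite dotvBl dotvZl xg0 mulr0 subr0. Qed.

Lemma orthogonal_step_neq0 x g a : x != 0 -> dotv x g = 0 -> x - a *: g != 0.
Proof.
move=> x0 xg0; apply/eqP => step0.
have := dotv_orthogonal_step a xg0; rewrite step0 dotv0r.
have := dotv_gt0 x0; have := mulr_ge0 (sqr_ge0 a) (dotv_ge0 g); lra.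
Qed.

End EuclideanGeometry.

Lemma derive_dotv_grad (R : realType) (d : nat) (f : 'rV[R]_d -> R) (w v : 'rV[R]_d) :
  differentiable f w -> 'D_v f w = dotv v (\row_i 'D_(delta_mx 0 i) f w).
Proof.
move=> df; rewrite deriveE // [X in 'd f w X]row_sum_delta linear_sum.
by apply: eq_bigr => i _; rewrite linearZ mxE -deriveE.
Qed.

Lemma derive_radial_eq0 (R : realType) (d : nat) (f : 'rV[R]_d -> R) (w : 'rV[R]_d) :
  (forall k, 0 < k -> f (k *: w) = f w) -> 'D_w f w = 0.
Proof.
move=> f_scale; rewrite /derive; apply: cvg_lim => //; apply: cvg_near_cst.
near=> h.
have h_small : `|h| < 1 by near: h; exact: dnbhs0_lt.
rewrite /= -{2}[w]scale1r -scalerDl f_scale ?subrr ?scaler0 //.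
by move: h_small; rewrite ltr_norml; lra.
Unshelve. all: by end_near.
Qed.

Lemma sqr_le_after_aligned_step (R : realFieldType) (r N eta q G : R) :
  0 < N -> 0 < eta -> 0 < r -> eta * r / N * G ^+ 2 <= - 2 * q ->
  r ^+ 2 <= (r * N - eta * q) ^+ 2 / (N ^+ 2 + eta ^+ 2 * G ^+ 2).
Proof.
move=> N0 eta0 r0 hyp.
have den0 : 0 < N ^+ 2 + eta ^+ 2 * G ^+ 2 by rewrite ltr_wpDr ?exprn_gt0 // mulr_ge0 ?sqr_ge0.
rewrite ler_pdivlMr //.
(* Multiplied by [eta r N], the hypothesis bounds the [G]-term of the expanded square. *)
have := ler_wpM2l (ltW (mulr_gt0 (mulr_gt0 eta0 r0) N0)) hyp.
have -> : eta * r * N * (eta * r / N * G ^+ 2) = (eta * r * G) ^+ 2.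
  by field; rewrite gt_eqF.
nra.
Qed.

Lemma sqr_ge_after_large_step (R : realFieldType) (r rp N eta q G : R) :
  0 < N -> 0 < eta -> 0 <= G -> 0 <= rp -> 0 < rp / r < 1 ->
  2 * r * rp / (r ^+ 2 - rp ^+ 2) <= eta / N * G -> `|q| <= rp * G ->
  (r * N - eta * q) ^+ 2 / (N ^+ 2 + eta ^+ 2 * G ^+ 2) <= r ^+ 2.
Proof.
move=> N0 eta0 G0 rp0 /andP[ratio0 ratio1] hyp hq.
have r0 : 0 < r.
  by rewrite ltNge; apply: contraTN ratio0 => r_le0; rewrite -leNgt mulr_ge0_le0 // invr_le0.
have rpr : rp < r by rewrite -[r]mul1r -ltr_pdivrMr.
(* With [s = eta G / N] the claim reduces to [(r + rp s)^2 <= r^2 (1 + s^2)],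
   i.e. to [s (s (r^2 - rp^2) - 2 r rp) >= 0]. *)
set s := eta / N * G in hyp.
have s0 : 0 <= s by rewrite !mulr_ge0 // ltW ?invr_gt0.
have etaG : eta * G = s * N by rewrite /s mulrAC divfK ?gt_eqF.
have gap0 : 0 < r ^+ 2 - rp ^+ 2 by rewrite subr_gt0 ltr_pXn2r // ?nnegrE // ltW.
have {}hyp : 2 * r * rp <= s * (r ^+ 2 - rp ^+ 2) by rewrite -ler_pdivrMr.
have den : N ^+ 2 + eta ^+ 2 * G ^+ 2 = N ^+ 2 * (1 + s ^+ 2).
  by rewrite -exprMn etaG; ring.
have etaq : `|eta * q| <= rp * s * N.
  rewrite normrM gtr0_norm //; apply: le_trans (ler_wpM2l (ltW eta0) hq) _.
  by rewrite mulrCA etaG mulrA.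
rewrite den ler_pdivrMr ?mulr_gt0 ?exprn_gt0 ?ltr_wpDr ?sqr_ge0 //.
have hnorm := ler_normB (r * N) (eta * q).
rewrite [`|r * N|]gtr0_norm ?mulr_gt0 // in hnorm.
have rhs0 : 0 <= r * N + rp * s * N.
  exact: addr_ge0 (ltW (mulr_gt0 r0 N0)) (mulr_ge0 (mulr_ge0 rp0 s0) (ltW N0)).
have hsq : (r * N - eta * q) ^+ 2 <= (r * N + rp * s * N) ^+ 2.
  rewrite -[X in X <= _]real_normK ?num_real //.
  rewrite ler_sqr ?nnegrE ?normr_ge0 //.
  by apply: le_trans hnorm _; rewrite lerD2l.
apply: le_trans hsq _; rewrite -subr_ge0.
have -> : r ^+ 2 * (N ^+ 2 * (1 + s ^+ 2)) - (r * N + rp * s * N) ^+ 2 =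
  N ^+ 2 * (s * (s * (r ^+ 2 - rp ^+ 2) - 2 * r * rp)) by ring.
by rewrite mulr_ge0 ?sqr_ge0 // mulr_ge0 // subr_ge0.
Qed.

Theorem lemma5p1 (R : realType) (d : nat) (F : 'rV[R]_d -> R -> R)
  (HFdiff : forall (w : 'rV[R]_d) (a : R), w != 0 ->
     differentiable (fun p : 'rV[R]_d * R => F p.1 p.2) (w, a))
  (HFscale : forall (w : 'rV[R]_d) (a k : R), w != 0 -> 0 < k ->
     F (k *: w) a = F w a)
  (what : 'rV[R]_d) (eta eta_a : R) (Heta : 0 < eta) (Heta_a : 0 < eta_a)
  (w : nat -> 'rV[R]_d) (alpha : nat -> R)
  (Hw0 : w 0%N != 0)
  (Hwrec : forall t, w t.+1 = w t - eta *: gradw F (w t) (alpha t))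
  (Halpharec : forall t, alpha t.+1 = alpha t - eta_a * derva F (w t) (alpha t)) :
  (forall t : nat,
     0 < rho what (w t) ->
     eta * rho what (w t) / enorm (w t) * enorm (gradw F (w t) (alpha t)) ^+ 2
       <= - 2 * dotv what (gradw F (w t) (alpha t)) ->
     rhoperp what (w t.+1) ^+ 2 <= rhoperp what (w t) ^+ 2)
  /\
  (forall t : nat,
     0 < rhoperp what (w t) / rho what (w t) < 1 ->
     0 < alpha t ->
     eta / enorm (w t) * enorm (gradw F (w t) (alpha t))
       >= 2 * rho what (w t) * rhoperp what (w t)
          / (rho what (w t) ^+ 2 - rhoperp what (w t) ^+ 2) ->
     rhoperp what (w t.+1) ^+ 2 >= rhoperp what (w t) ^+ 2).
Proof.
have gradw_orth x a : x != 0 -> dotv x (gradw F x a) = 0.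
  move=> x0; rewrite -derive_dotv_grad ?derive_radial_eq0 // => [k k0|].
    exact: HFscale.
  have -> : (fun v => F v a) = (fun p => F p.1 p.2) \o (fun v => (v, a)) by [].
  by apply: differentiable_comp; [exact: differentiable_pair | exact: HFdiff].
have w_neq0 t : w t != 0.
  by elim: t => // t IH; rewrite Hwrec orthogonal_step_neq0 ?gradw_orth.
have rho_next t := rho_orthogonal_step what eta (w_neq0 t) (gradw_orth _ (alpha t) (w_neq0 t)).
split=> t.
  move=> rho0 aligned; rewrite !rhoperp_sq ?w_neq0 // lerD2l lerN2 Hwrec rho_next.
  by apply: sqr_le_after_aligned_step => //; exact: enorm_gt0.
move=> ratio _ large; rewrite !rhoperp_sq ?w_neq0 // lerD2l lerN2 Hwrec rho_next.
apply: (@sqr_ge_after_large_step _ _ (rhoperp what (w t))) => //;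
  rewrite ?enorm_gt0 ?enorm_ge0 //.
rewrite (dotv_projection_orthogonal what (gradw_orth _ (alpha t) (w_neq0 t))).
exact: normr_dotv_le.
Qed.
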